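(* Let $K$ be an algebraically closed field of characteristic $\ne2$, $G=\mathrm{PGL}_n(K)$, $n=2^st$ with $t$ odd and $s,t\ge1$. Let $1\le r\le s$, $n=2^rk$, and let $D=D_r\times (H\otimes I_{2^r})$, where $H$ is either trivial or a toral elementary abelian $2$-subgroup of $\mathrm{PGL}_k(K)$ with $C_{\mathrm{PGL}_k(K)}(H)$ connected. Then $C_G(D)=\langle C_G(D)^\circ,\bar B_0,\dots,\bar B_{r-1}\rangle=C_G(D)^\circ\cdot B_r$.
   Context: $C_G(D)^\circ$ is the identity component. Notation ($p=2$): for $0\le s'\le r-1$, $\sigma_{s'}$ is the permutation of $\{1,\dots,2^r\}$ with $\sigma_{s'}(i)=i+2^{s'}$ if $i\equiv 1,\dots,2^{s'}\pmod{2^{s'+1}}$ and $\sigma_{s'}(i)=i-2^{s'}$ otherwise; $A_{s'}$ is diagonal $2^r\times2^r$ with $(A_{s'})_{ii}=(-1)^{\lfloor(i-1)/2^{s'}\rfloor}$; $B_{s'}$ is the permutation matrix with $(B_{s'})_{ij}=1$ iff $\sigma_{s'}(i)=j$. $\bar A_{s'},\bar B_{s'}\in\mathrm{PGL}_n(K)$ are the images of $I_k\otimes A_{s'}$, $I_k\otimes B_{s'}$. $D_r=\langle\bar A_0,\dots,\bar A_{r-1}\rangle$, $B_r=\langle\bar B_0,\dots,\bar B_{r-1}\rangle$. $H\otimes I_{2^r}$ is the image of $\{h\otimes I_{2^r}:h\in H\}$ (Kronecker product). Toral means contained in a maximal torus. *)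

From HB Require Import structures.
From mathcomp Require Import all_boot all_order all_algebra.
From mathcomp Require Import mpoly.
From mathcomp Require Import mxtens.

Set Implicit Arguments.
Unset Strict Implicit.
Unset Printing Implicit Defensive.

Import GRing.Theory.
Local Open Scope ring_scope.

(* PGL_m(K) = GL_m(K)/K^*.  A subset of PGL_m(K) is represented by its full   *)
(* preimage in GL_m(K), i.e. by a set of invertible m x m matrices which is  *)
(* closed under multiplication by nonzero scalars.                           *)

Section Defs.
Variable K : fieldType.

Definition scal_closed m (X : 'M[K]_m -> Prop) :=
  forall (c : K) (A : 'M[K]_m), c != 0 -> X A -> X (c *: A).

Inductive gen_grp m (S : 'M[K]_m -> Prop) : 'M[K]_m -> Prop :=
| gen_in   : forall A, S A -> gen_grp S A
| gen_one  : gen_grp S 1%:M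
| gen_mul  : forall A B, gen_grp S A -> gen_grp S B -> gen_grp S (A *m B)
| gen_inv  : forall A, gen_grp S A -> gen_grp S (invmx A).

(* preimage in GL_m of the centralizer in PGL_m of (the image of) S:
   g centralizes x in PGL iff g x g^{-1} = c x for some scalar c *)
Definition pcent m (S : 'M[K]_m -> Prop) : 'M[K]_m -> Prop :=
  fun g => g \in unitmx /\
    forall x, S x -> exists c : K, g *m x = c *: (x *m g).

Definition zclosed m (Z : 'M[K]_m -> Prop) :=
  exists P : {mpoly K[m * m]} -> Prop,
    forall A, Z A <-> (forall p, P p -> p.@[fun i => mxvec A 0 i] = 0).

(* closed subsets of PGL_m(K) (quotient topology of the Zariski topology of
   GL_m(K), GL_m carrying the subspace topology from M_m), given by their
   preimages in GL_m *)
Definition pclosed m (F : 'M[K]_m -> Prop) :=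
  scal_closed F /\
  exists Z, zclosed Z /\ forall A, F A <-> (A \in unitmx /\ Z A).

Definition pconnected m (X : 'M[K]_m -> Prop) :=
  ~ exists F1 F2 : 'M[K]_m -> Prop,
      [/\ pclosed F1 /\ pclosed F2,
          (forall A, X A -> F1 A \/ F2 A),
          (exists A, X A /\ F1 A),
          (exists A, X A /\ F2 A) &
          (forall A, X A -> F1 A -> F2 A -> False)].

(* preimage of the identity component of (the image in PGL_m of) X:
   union of all connected subsets of PGL_m contained in X containing 1 *)
Definition pidcomp m (X : 'M[K]_m -> Prop) : 'M[K]_m -> Prop :=
  fun A => exists Y : 'M[K]_m -> Prop,
    [/\ scal_closed Y, (forall B, Y B -> X B), Y 1%:M, pconnected Y & Y A].

(* the matrices A_{s'} and B_{s'} (0-based indices: paper's i is i0+1) *)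
Definition sigma_idx (s' i0 : nat) : nat :=
  if odd (i0 %/ 2 ^ s') then (i0 - 2 ^ s')%N else (i0 + 2 ^ s')%N.

Definition Amx (r s' : nat) : 'M[K]_(2 ^ r) :=
  \matrix_(i, j) (if i == j then (-1) ^+ (i %/ 2 ^ s') else 0).

Definition Bmx (r s' : nat) : 'M[K]_(2 ^ r) :=
  \matrix_(i, j) (if sigma_idx s' i == j then 1 else 0).

Definition Abar (k r s' : nat) : 'M[K]_(k * 2 ^ r) := tensmx (1%:M : 'M[K]_k) (Amx r s').
Definition Bbar (k r s' : nat) : 'M[K]_(k * 2 ^ r) := tensmx (1%:M : 'M[K]_k) (Bmx r s').

(* preimage in GL_n of D = D_r x (H \otimes I_{2^r}), where Hpre is the
   preimage of H in GL_k *)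
Definition Dpre (k r : nat) (Hpre : 'M[K]_k -> Prop) : 'M[K]_(k * 2 ^ r) -> Prop :=
  gen_grp (fun x =>
    (exists c : K, c != 0 /\ x = c%:M)
    \/ (exists s', (s' < r)%N /\ x = Abar k r s')
    \/ (exists h, Hpre h /\ x = tensmx h (1%:M : 'M[K]_(2 ^ r)))).

Definition is_pgl_subgroup m (Hpre : 'M[K]_m -> Prop) :=
  [/\ (forall h, Hpre h -> h \in unitmx),
      Hpre 1%:M,
      (forall h1 h2, Hpre h1 -> Hpre h2 -> Hpre (h1 *m h2)),
      (forall h, Hpre h -> Hpre (invmx h)) &
      scal_closed Hpre].

Definition pgl_trivial m (Hpre : 'M[K]_m -> Prop) :=
  forall h, Hpre h -> exists c : K, h = c%:M.

Definition pgl_elem_ab2 m (Hpre : 'M[K]_m -> Prop) :=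
  (forall h1 h2, Hpre h1 -> Hpre h2 -> exists c : K, h1 *m h2 = c *: (h2 *m h1))
  /\ (forall h, Hpre h -> exists c : K, h *m h = c%:M).

(* toral: contained in a maximal torus of PGL_m; the maximal tori of PGL_m
   are the images of the maximal tori g Diag g^{-1} of GL_m *)
Definition pgl_toral m (Hpre : 'M[K]_m -> Prop) :=
  exists g : 'M[K]_m, g \in unitmx /\
    forall h, Hpre h -> is_diag_mx (g *m h *m invmx g).

End Defs.

From HB Require Import structures.
From mathcomp Require Import all_boot all_order all_algebra.
From mathcomp Require Import mpoly mxtens.
From mathcomp Require Import zify.
From Stdlib Require Import Classical.

Import GRing.Theory.
Set Implicit Arguments.
Unset Strict Implicit.
Unset Printing Implicit Defensive.

(* An element g of C_G(D) conjugates each \bar A_i into \pm \bar A_i, and \bar B_j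
   anticommutes with \bar A_j while commuting with the other generators of D; so after
   multiplying g by suitable \bar B_j we get c commuting exactly with every \bar A_i.
   Such a c is block diagonal for K^n = K^k (x) K^(2^r), and a diagonal block of c lies
   in C_{PGL_k}(H).  Since that centralizer is connected and h^2 is scalar for h in H,
   the sign by which the block twists h is +1, so c commutes exactly with H (x) I too.
   Finally, the invertible matrices commuting exactly with D form an open subset of a
   linear space containing 1; every line through 1 meets it in a cofinite set, so it is
   connected and lies in the identity component of C_G(D). *)

Lemma divn_mulXD_ge (y v j i : nat) : v < 2 ^ j -> j <= i ->
  (y * 2 ^ j + v) %/ 2 ^ i = y %/ 2 ^ (i - j).
Proof.
move=> v_lt j_le; rewrite -{1}(subnKC j_le) expnD divnMA divnMDl ?expn_gt0 //.
by rewrite (divn_small v_lt) addn0.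
Qed.

Lemma divn_mulXD_lt (y v j i : nat) : i < j ->
  (y * 2 ^ j + v) %/ 2 ^ i = y * 2 ^ (j - i) + v %/ 2 ^ i.
Proof.
by move=> i_lt; rewrite -{1}(subnK (ltnW i_lt)) expnD mulnA divnMDl ?expn_gt0.
Qed.

Definition flip_bit0 y := if odd y then y.-1 else y.+1.

Lemma odd_flip_bit0 y : odd (flip_bit0 y) = ~~ odd y.
Proof.
by rewrite /flip_bit0; case: y => [|y] //=; rewrite negbK; case: ifP => /=; rewrite ?negbK.
Qed.

Lemma flip_bit0K : involutive flip_bit0.
Proof.
move=> y; rewrite {1}/flip_bit0 odd_flip_bit0 /flip_bit0.
by case y_odd: (odd y) => //=; case: y y_odd.
Qed.

Lemma flip_bit0_divX y d : 0 < d -> flip_bit0 y %/ 2 ^ d = y %/ 2 ^ d.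
Proof.
case: d => // d _; rewrite expnS !divnMA; congr (_ %/ _).
have := odd_double_half y; rewrite /flip_bit0; case: (odd y) => /= e; rewrite -e -!muln2; lia.
Qed.

Lemma sigma_idxE j x : sigma_idx j x = flip_bit0 (x %/ 2 ^ j) * 2 ^ j + x %% 2 ^ j.
Proof.
have := divn_eq x (2 ^ j); rewrite /sigma_idx /flip_bit0.
move: (x %/ 2 ^ j) (x %% 2 ^ j) => y v ->.
case: y => [|y] /=; first by rewrite mul0n add0n mul1n addnC.
case: (odd y) => /=; rewrite ?mulSn; lia.
Qed.

Lemma odd_sigma_idx j i x : odd (sigma_idx j x %/ 2 ^ i) = (i == j) (+) odd (x %/ 2 ^ i).
Proof.
have v_lt : x %% 2 ^ j < 2 ^ j by rewrite ltn_pmod ?expn_gt0.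
rewrite sigma_idxE [in RHS](divn_eq x (2 ^ j)).
move: (x %/ 2 ^ j) (x %% 2 ^ j) v_lt => y v v_lt.
case: (ltngtP i j) => [ij|ji|->].
- by rewrite !divn_mulXD_lt // !oddD !oddM !oddX subn_eq0 leqNgt ij /= !andbF.
- by rewrite !divn_mulXD_ge ?(ltnW ji) // flip_bit0_divX // subn_gt0.
- by rewrite !divn_mulXD_ge // subnn expn0 !divn1 odd_flip_bit0.
Qed.

Lemma sigma_idxK j : involutive (sigma_idx j).
Proof.
move=> x; have v_lt : x %% 2 ^ j < 2 ^ j by rewrite ltn_pmod ?expn_gt0.
rewrite (sigma_idxE j (sigma_idx j x)) sigma_idxE divnMDl ?modnMDl ?expn_gt0 //.
by rewrite (divn_small v_lt) modn_mod addn0 flip_bit0K -divn_eq.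
Qed.

Lemma sigma_idx_lt r j x : j < r -> x < 2 ^ r -> sigma_idx j x < 2 ^ r.
Proof.
move=> j_lt x_lt; have v_lt : x %% 2 ^ j < 2 ^ j by rewrite ltn_pmod ?expn_gt0.
have eP : 2 ^ r = 2 ^ (r - j) * 2 ^ j by rewrite -expnD subnK // ltnW.
have y_lt : x %/ 2 ^ j < 2 ^ (r - j) by rewrite ltn_divLR ?expn_gt0 // -eP.
have even_P : ~~ odd (2 ^ (r - j)) by rewrite oddX /= orbF subn_eq0 -ltnNge j_lt.
have fy_lt : flip_bit0 (x %/ 2 ^ j) < 2 ^ (r - j).
  rewrite /flip_bit0; case y_odd: (odd _); first exact: leq_ltn_trans (leq_pred _) y_lt.
  rewrite ltn_neqAle y_lt andbT; apply: contraNneq even_P => <- /=.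
  by rewrite y_odd.
rewrite sigma_idxE eP; apply: (@leq_trans ((flip_bit0 (x %/ 2 ^ j)).+1 * 2 ^ j)).
  by rewrite mulSn addnC ltn_add2r.
by rewrite leq_mul2r fy_lt orbT.
Qed.

Lemma bits_inj r x y : x < 2 ^ r -> y < 2 ^ r ->
  (forall i, i < r -> odd (x %/ 2 ^ i) = odd (y %/ 2 ^ i)) -> x = y.
Proof.
elim: r x y => [|r IH] x y; first by rewrite expn0 !ltnS !leqn0 => /eqP -> /eqP ->.
move=> x_lt y_lt bits; have := bits 0 isT; rewrite expn0 !divn1 => bit0.
have half_eq : x %/ 2 = y %/ 2.
  apply: IH; rewrite ?ltn_divLR -?expnSr //.
  by move=> i i_lt; rewrite -!divnMA -expnS; apply: bits.
by rewrite (divn_eq x 2) (divn_eq y 2) half_eq !modn2 bit0.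
Qed.

Local Open Scope ring_scope.

Section Commutation.
Variables (K : fieldType) (n : nat).
Implicit Types (g x y : 'M[K]_n) (S T : 'M[K]_n -> Prop).

Lemma gen_grp_mono S T x : (forall y, S y -> T y) -> gen_grp S x -> gen_grp T x.
Proof.
move=> ST; elim=> {x} [x /ST|| x y _ Tx _ Ty| x _ Tx].
- exact: gen_in.
- exact: gen_one.
- exact: gen_mul.
- exact: gen_inv.
Qed.

Definition pcomm g x := exists c : K, g *m x = c *: (x *m g).

Lemma pcommMr g x y : pcomm g x -> pcomm g y -> pcomm g (x *m y).
Proof.
move=> [c gx] [d gy]; exists (c * d).
by rewrite mulmxA gx -scalemxAl -mulmxA gy -scalemxAr scalerA mulmxA.
Qed.

Lemma pcommMl g1 g2 x : pcomm g1 x -> pcomm g2 x -> pcomm (g1 *m g2) x.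
Proof.
move=> [c g1x] [d g2x]; exists (d * c).
by rewrite -mulmxA g2x -scalemxAr [g1 *m (x *m _)]mulmxA g1x -scalemxAl scalerA mulmxA.
Qed.

Lemma pcommVl g x : g \in unitmx -> pcomm g x -> pcomm (invmx g) x.
Proof.
move=> g_unit [c gx]; have [c0|c_neq0] := eqVneq c 0.
  have -> : x = 0 by rewrite -[x]mul1mx -(mulVmx g_unit) -mulmxA gx c0 scale0r mulmx0.
  by exists 0; rewrite mulmx0 scale0r.
exists c^-1; suff -> : x *m invmx g = c *: (invmx g *m x) by rewrite scalerA mulVf ?scale1r.
by rewrite -[x *m _]mul1mx -(mulVmx g_unit) -!mulmxA (mulmxA g) gx -scalemxAl -mulmxA
  mulmxV // mulmx1 scalemxAr.
Qed.

Lemma pcommVr g x : g \in unitmx -> pcomm g x -> pcomm g (invmx x).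
Proof.
move=> g_unit [c gx]; have [x_unit|x_nunit] := boolP (x \in unitmx); last first.
  by rewrite invmx_out //; exists c.
have [c0|c_neq0] := eqVneq c 0.
  have -> : g = 0 by rewrite -[g]mulmx1 -(mulmxV x_unit) mulmxA gx c0 scale0r mul0mx.
  by exists 0; rewrite mul0mx mulmx0 scale0r.
exists c^-1; suff -> : invmx x *m g = c *: (g *m invmx x) by rewrite scalerA mulVf ?scale1r.
by rewrite -[invmx x *m g]mulmx1 -(mulmxV x_unit) !mulmxA -(mulmxA _ g) gx
  -scalemxAr mulmxA mulVmx // mul1mx scalemxAl.
Qed.

Lemma pcomm_gen g S : g \in unitmx -> (forall x, S x -> pcomm g x) ->
  forall x, gen_grp S x -> pcomm g x.
Proof.
move=> g_unit gS x; elim=> {x} [x /gS //| |x y _ gx _ gy|x _ gx].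
- by exists 1; rewrite scale1r mulmx1 mul1mx.
- exact: pcommMr.
- exact: pcommVr.
Qed.

Lemma pcent1 S : pcent S 1%:M.
Proof. by split=> [|x _]; [exact: unitmx1 | exists 1; rewrite scale1r mulmx1 mul1mx]. Qed.

Lemma pcentM S g1 g2 : pcent S g1 -> pcent S g2 -> pcent S (g1 *m g2).
Proof.
move=> [g1_unit g1S] [g2_unit g2S]; split=> [|x Sx]; first by rewrite unitmx_mul g1_unit.
exact: pcommMl (g1S x Sx) (g2S x Sx).
Qed.

Lemma pcentV S g : pcent S g -> pcent S (invmx g).
Proof.
by move=> [g_unit gS]; split=> [|x Sx]; [rewrite unitmx_inv | exact: pcommVl (gS x Sx)].
Qed.

Lemma gen_grp_pcent S T x : (forall y, T y -> pcent S y) -> gen_grp T x -> pcent S x.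
Proof.
move=> TS; elim=> {x} [x /TS //| |x y _ Sx _ Sy|x _ Sx].
- exact: pcent1.
- exact: pcentM.
- exact: pcentV.
Qed.

Lemma pidcomp_pcent S g : pidcomp (pcent S) g -> pcent S g.
Proof. by move=> [Y [_ YS _ _ Yg]]; apply: YS. Qed.

Definition xcent S g := g \in unitmx /\ forall x, S x -> comm_mx g x.

Lemma comm_mxVr g x : comm_mx g x -> comm_mx g (invmx x).
Proof.
move=> gx; have [x_unit|x_nunit] := boolP (x \in unitmx); last by rewrite invmx_out.
rewrite /comm_mx -[RHS]mulmx1 -(mulmxV x_unit) !mulmxA -(mulmxA _ g) gx.
by rewrite mulmxA mulVmx // mul1mx.
Qed.

Lemma xcent_gen S g : xcent S g -> xcent (gen_grp S) g.
Proof.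
move=> [g_unit gS]; split=> // x; elim=> {x} [x /gS //| |x y _ gx _ gy|x _ gx].
- exact: comm_mx1.
- exact: comm_mxM.
- exact: comm_mxVr.
Qed.

Lemma xcent_pcent S g : xcent S g -> pcent S g.
Proof. by move=> [g_unit gS]; split=> // x /gS gx; exists 1; rewrite scale1r. Qed.

End Commutation.

Section TwistedCommutation.
Variable K : fieldType.

Lemma unitmx_neq0 m (A : 'M[K]_m) : (0 < m)%N -> A \in unitmx -> A != 0.
Proof.
by case: m A => // m A _; apply: contraTneq => ->; rewrite unitmxE det0 unitr0.
Qed.

Lemma scale_unitmx_eq0 m (c : K) (A : 'M[K]_m) :
  (0 < m)%N -> A \in unitmx -> c *: A = 0 -> c = 0.
Proof.
move=> m_gt0 A_unit /eqP; rewrite scaler_eq0 (negbTE (unitmx_neq0 m_gt0 A_unit)) orbF.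
by move/eqP.
Qed.

Lemma twisted_comm_sign m (x h : 'M[K]_m) (a c : K) : (0 < m)%N ->
  x \in unitmx -> h \in unitmx -> h *m h = a%:M -> x *m h = c *: (h *m x) ->
  c = 1 \/ c = -1.
Proof.
move=> m_gt0 x_unit h_unit hh xh.
have a_neq0 : a != 0.
  apply/eqP => a0; have hh_unit : h *m h \in unitmx by rewrite unitmx_mul h_unit.
  by have := unitmx_neq0 m_gt0 hh_unit; rewrite hh a0 raddf0 eqxx.
have xhh : x *m (h *m h) = c ^+ 2 *: ((h *m h) *m x).
  by rewrite mulmxA xh -scalemxAl -mulmxA xh -scalemxAr scalerA mulmxA expr2.
rewrite hh mul_mx_scalar mul_scalar_mx scalerA in xhh.
have : (a - c ^+ 2 * a) *: x = 0 by rewrite scalerBl -xhh subrr.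
move/(scale_unitmx_eq0 m_gt0 x_unit)/eqP; rewrite subr_eq0 -{1}[a]mul1r.
rewrite (inj_eq (mulIf a_neq0)) eq_sym sqrf_eq1.
by case/orP => /eqP ->; [left | right].
Qed.

End TwistedCommutation.

Section ZariskiClosed.
Variable K : fieldType.

Lemma zclosed_mxvec_ker m p (M : 'M[K]_(m * m, p)) :
  zclosed (fun A : 'M[K]_m => mxvec A *m M = 0).
Proof.
exists (fun q => exists j : 'I_p, q = \sum_(l < m * m) M l j *: 'X_l) => A.
have evalE j : (\sum_(l < m * m) M l j *: 'X_l).@[fun i => mxvec A 0 i] = (mxvec A *m M) 0 j.
  rewrite (big_morph _ (mevalD _) (meval0 _)) mxE.
  by apply: eq_bigr => l _; rewrite mevalZ mevalXU mulrC.
split=> [AM0 q [j ->]|AM0]; first by rewrite evalE AM0 mxE.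
by apply/rowP => j; rewrite -evalE mxE; apply: AM0; exists j.
Qed.

Lemma pclosed_twisted_comm m (h : 'M[K]_m) (d : K) :
  pclosed (fun A => A \in unitmx /\ A *m h = d *: (h *m A)).
Proof.
split.
  move=> c A c_neq0 [A_unit Ah]; split; first by rewrite unitmxZ ?unitfE.
  by rewrite -scalemxAl Ah scalerA mulrC -scalerA scalemxAr.
exists (fun A : 'M[K]_m => mxvec A *m (lin_mulmxr h - d *: lin_mulmx h) = 0).
split=> [|A]; first exact: zclosed_mxvec_ker.
suff -> : (mxvec A *m (lin_mulmxr h - d *: lin_mulmx h) = 0) <-> (A *m h = d *: (h *m A)).
  by [].
rewrite mulmxBr -scalemxAr /lin_mulmxr /lin_mulmx !mul_vec_lin /= -linearZ -linearB /=.
split=> [|->]; last by rewrite subrr linear0.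
by move/(congr1 vec_mx); rewrite mxvecK linear0 => /subr0_eq.
Qed.

Lemma pconnected_pcent_comm m (S : 'M[K]_m -> Prop) (h : 'M[K]_m) (a : K) :
  2%:R != 0 :> K -> (0 < m)%N -> S h -> h \in unitmx -> h *m h = a%:M ->
  pconnected (pcent S) -> forall g, pcent S g -> comm_mx g h.
Proof.
move=> two_neq0 m_gt0 Sh h_unit hh S_conn g [g_unit gS].
have [c gh] := gS h Sh.
have [c1|cN1] := twisted_comm_sign m_gt0 g_unit h_unit hh gh.
  by rewrite /comm_mx gh c1 scale1r.
(* Otherwise pcent S splits into the closed sets where g commutes, resp. anticommutes,
   with h. *)
case: S_conn.
exists (fun A => A \in unitmx /\ A *m h = 1 *: (h *m A)),
       (fun A => A \in unitmx /\ A *m h = (-1) *: (h *m A)); split.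
- by split; apply: pclosed_twisted_comm.
- move=> A [A_unit AS]; have [d Ah] := AS h Sh.
  by case: (twisted_comm_sign m_gt0 A_unit h_unit hh Ah) => <-; [left | right].
- by exists 1%:M; split; [apply: pcent1 | rewrite unitmx1 mulmx1 mul1mx scale1r].
- by exists g; split; [split | rewrite -cN1].
- move=> A _ [A_unit Ah] [_ AhN].
  have hA_unit : h *m A \in unitmx by rewrite unitmx_mul h_unit.
  suff : 2%:R = 0 :> K by apply/eqP.
  apply: (scale_unitmx_eq0 m_gt0 hA_unit).
  by rewrite scaler_nat mulr2n -{1}[h *m A]scale1r -Ah AhN scaleN1r addNr.
Qed.

Lemma meval_line N (p : {mpoly K[N]}) (u w : 'I_N -> K) :
  exists q : {poly K}, forall t, q.[t] = p.@[fun i => u i + t * w i].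
Proof.
exists (mmap (fun c : K => c%:P) (fun i => (u i)%:P + (w i)%:P * 'X) p) => t.
rewrite /mmap mevalE -/(horner_eval t _) rmorph_sum; apply: eq_bigr => mon _.
rewrite rmorphM /= /mmap1 rmorph_prod /=; congr (_ * _); first exact: hornerC.
by apply: eq_bigr => i _; rewrite rmorphXn /= /horner_eval !hornerE mulrC.
Qed.

Lemma zclosed_line m (Z : 'M[K]_m -> Prop) (u w : 'M[K]_m) : zclosed Z ->
  (forall t, Z (u + t *: w)) \/
  exists2 q : {poly K}, q != 0 & forall t, Z (u + t *: w) -> root q t.
Proof.
move=> [P ZP].
have [[p [Pp [t0 pt0]]]|Z_line] :=
  classic (exists p, P p /\ exists t, p.@[fun i => mxvec (u + t *: w) 0 i] != 0).
  right; have [q qE] := meval_line p (fun i => mxvec u 0 i) (fun i => mxvec w 0 i).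
  have {}qE t : q.[t] = p.@[fun i => mxvec (u + t *: w) 0 i].
    by rewrite qE; apply: meval_eq => i; rewrite linearD linearZ !mxE.
  exists q => [|t /ZP Zt]; last by rewrite /root qE Zt.
  by apply: contra_neq pt0 => q0; rewrite -qE q0 horner0.
left=> t; apply/ZP => p Pp; apply/eqP/negbNE/negP => pt.
by apply: Z_line; exists p; split=> //; exists t.
Qed.

Lemma det_line_poly m (w : 'M[K]_m) :
  exists2 d : {poly K}, d != 0 & forall t, d.[t] = \det (1%:M + t *: w).
Proof.
pose d := \det (map_mx polyC 1%:M + 'X *: map_mx polyC w).
have dE t : d.[t] = \det (1%:M + t *: w).
  rewrite /d -/(horner_eval t _) -det_map_mx; congr (\det _).
  by apply/matrixP => i j; rewrite !mxE [LHS]/(horner_eval t _) /horner_eval !hornerE.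
exists d => //; apply: contra_neq (@oner_neq0 K) => d0.
by rewrite -(det1 K m) -[1%:M](addr0 _) -(scale0r w) -dE d0 horner0.
Qed.

End ZariskiClosed.

Section Connectedness.
Variable K : closedFieldType.

Lemma line_pconnected m (Y : 'M[K]_m -> Prop) :
  (forall y, Y y -> y \in unitmx) -> Y 1%:M ->
  (forall y t, Y y -> 1%:M + t *: (y - 1%:M) \in unitmx -> Y (1%:M + t *: (y - 1%:M))) ->
  pconnected Y.
Proof.
move=> Y_unit Y1 Y_line [F1 [F2 [[[_ [Z1 [Z1_closed F1E]]] [_ [Z2 [Z2_closed F2E]]]]
  cover [y1 [Yy1 F1y1]] [y2 [Yy2 F2y2]] disj]]].
suff F1_const y : Y y -> F1 y <-> F1 1%:M.
  by apply: (disj y2 Yy2) => //; apply/(F1_const y2 Yy2)/(F1_const y1 Yy1).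
(* On the line through 1 and y each Z_i either contains every point or only roots of a
   nonzero polynomial, while all but finitely many of its points are invertible. *)
move=> Yy; pose phi t : 'M[K]_m := 1%:M + t *: (y - 1%:M).
have phi0 : phi 0 = 1%:M by rewrite /phi scale0r addr0.
have phi1 : phi 1 = y by rewrite /phi scale1r addrC subrK.
have [Z1_line|[q1 q1_neq0 q1_root]] := zclosed_line 1%:M (y - 1%:M) Z1_closed.
  split=> _; [apply/F1E; rewrite unitmx1 -phi0 | apply/F1E; rewrite Y_unit // -phi1];
    by split; last exact: Z1_line.
have [Z2_line|[q2 q2_neq0 q2_root]] := zclosed_line 1%:M (y - 1%:M) Z2_closed.
  have F2_1 : F2 1%:M by apply/F2E; rewrite unitmx1 -phi0; split; last exact: Z2_line.
  have F2_y : F2 y by apply/F2E; rewrite Y_unit // -phi1; split; last exact: Z2_line.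
  by split=> F1_; exfalso; [apply: (disj y) | apply: (disj 1%:M)].
have [d d_neq0 dE] := det_line_poly (y - 1%:M).
have /closed_nonrootP [t] := mulf_neq0 (mulf_neq0 d_neq0 q1_neq0) q2_neq0.
rewrite /root !hornerM !mulf_eq0 !negb_or => /andP [/andP [dt q1t] q2t].
have Y_phi : Y (phi t) by apply: Y_line; rewrite // unitmxE unitfE -dE.
exfalso; case: (cover _ Y_phi) => [/F1E [_ /q1_root]|/F2E [_ /q2_root]].
  by rewrite /root (negbTE q1t).
by rewrite /root (negbTE q2t).
Qed.

Lemma xcent_pidcomp m (S : 'M[K]_m -> Prop) g : xcent S g -> pidcomp (pcent S) g.
Proof.
move=> Sg; have S1 : xcent S 1%:M by split=> [|x _]; [exact: unitmx1 | exact: comm1mx].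
exists (xcent S); split=> //.
- move=> c A c_neq0 [A_unit AS]; split=> [|x /AS Ax]; first by rewrite unitmxZ ?unitfE.
  by rewrite /comm_mx -scalemxAl Ax scalemxAr.
- exact: xcent_pcent.
apply: line_pconnected => // [y [] //|y t [_ yS] line_unit].
split=> // x /yS yx; rewrite /comm_mx mulmxDl mulmxDr mul1mx mulmx1.
by rewrite -scalemxAl -scalemxAr mulmxBl mulmxBr mul1mx mulmx1 yx.
Qed.

End Connectedness.

Section SignAndSwapMatrices.
Variable K : fieldType.

Lemma Amx_sq r i : Amx K r i *m Amx K r i = 1%:M.
Proof.
apply/matrixP => x y; rewrite !mxE (bigD1 x) //= big1 => [|z zx]; last first.
  by rewrite !mxE eq_sym (negbTE zx) mul0r.
rewrite !mxE eqxx addr0; case: eqP => _; last by rewrite mulr0.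
by rewrite -exprD -signr_odd oddD addbb.
Qed.

Lemma Bmx_sq r j : (j < r)%N -> Bmx K r j *m Bmx K r j = 1%:M.
Proof.
move=> j_lt; apply/matrixP => x y.
have sx_lt : (sigma_idx j x < 2 ^ r)%N by apply: sigma_idx_lt.
rewrite !mxE (bigD1 (Ordinal sx_lt)) //= big1 => [|z zx]; last first.
  rewrite !mxE; case: eqP => [sxz|]; last by rewrite mul0r.
  by move: zx; rewrite -val_eqE /= sxz eqxx.
by rewrite !mxE eqxx mul1r addr0 sigma_idxK val_eqE; case: (x == y).
Qed.

Lemma Bmx_Amx r i j :
  Bmx K r j *m Amx K r i = (-1) ^+ (i == j)%N *: (Amx K r i *m Bmx K r j).
Proof.
apply/matrixP => x y; rewrite !mxE (bigD1 y) //= big1 => [|z zy]; last first.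
  by rewrite !mxE (negbTE zy) mulr0.
rewrite (bigD1 x) //= big1 => [|z zx]; last by rewrite !mxE eq_sym (negbTE zx) mul0r.
rewrite !mxE !eqxx !addr0; case: eqP => [<-|_]; last by rewrite !mul0r !mulr0.
by rewrite mul1r mulr1 -signr_odd odd_sigma_idx signr_addb signr_odd.
Qed.

Lemma tensmx_scalar1 m q (c : K) : (c%:M : 'M[K]_m) *t (1%:M : 'M[K]_q) = c%:M.
Proof.
apply/matrixP => x y; case: (mxtens_indexP x) => a l; case: (mxtens_indexP y) => b l'.
rewrite tensmxE !mxE (inj_eq (can_inj (@mxtens_indexK _ _))) xpair_eqE.
by case: (a == b); case: (l == l'); rewrite ?mulr1 ?mulr0 ?mul0r.
Qed.

Lemma tensmxZr m n p q (M : 'M[K]_(m, n)) (N : 'M[K]_(p, q)) c :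
  M *t (c *: N) = c *: (M *t N).
Proof. by apply/matrixP => i j; rewrite !mxE mulrCA. Qed.

Variables k r : nat.

Lemma Abar_sq i : Abar K k r i *m Abar K k r i = 1%:M.
Proof. by rewrite tensmx_mul mul1mx Amx_sq tensmx_scalar1. Qed.

Lemma Bbar_sq j : (j < r)%N -> Bbar K k r j *m Bbar K k r j = 1%:M.
Proof. by move=> j_lt; rewrite tensmx_mul mul1mx Bmx_sq // tensmx_scalar1. Qed.

Lemma Abar_unit i : Abar K k r i \in unitmx.
Proof. by case: (mulmx1_unit (Abar_sq i)). Qed.

Lemma Bbar_unit j : (j < r)%N -> Bbar K k r j \in unitmx.
Proof. by move=> j_lt; case: (mulmx1_unit (Bbar_sq j_lt)). Qed.

Lemma Bbar_Abar i j :
  Bbar K k r j *m Abar K k r i = (-1) ^+ (i == j)%N *: (Abar K k r i *m Bbar K k r j).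
Proof. by rewrite !tensmx_mul !mul1mx Bmx_Amx tensmxZr. Qed.

Lemma comm_tens1mx (h : 'M[K]_k) (M : 'M[K]_(2 ^ r)) :
  comm_mx (1%:M *t M) (h *t 1%:M).
Proof. by rewrite /comm_mx !tensmx_mul !mul1mx !mulmx1. Qed.

Lemma Abar_diag i :
  Abar K k r i = diag_mx (\row_w (-1) ^+ ((mxtens_unindex w).2 %/ 2 ^ i)%N).
Proof.
apply/matrixP => x y; case: (mxtens_indexP x) => a l; case: (mxtens_indexP y) => b l'.
rewrite tensmxE !mxE mxtens_indexK /= (inj_eq (can_inj (@mxtens_indexK _ _))) xpair_eqE.
by case: (a == b); case: (l =P l') => [->|_]; rewrite ?mulr1 ?mulr0 ?mul0r ?mul1r.
Qed.

End SignAndSwapMatrices.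

Section DiagonalBlocks.
Variables (K : fieldType) (k N : nat).
Implicit Types M : 'M[K]_(k * N).

Definition blockdiag M := forall a b (l l' : 'I_N), l != l' ->
  M (mxtens_index (a, l)) (mxtens_index (b, l')) = 0.

Lemma tens1_blockdiag (h : 'M[K]_k) : blockdiag (h *t 1%:M).
Proof. by move=> a b l l' ll'; rewrite tensmxE mxE (negbTE ll') mulr0. Qed.

Lemma big_mxtens_index (F : 'I_(k * N) -> K) :
  \sum_w F w = \sum_a \sum_l F (mxtens_index (a, l)).
Proof.
rewrite pair_big /= (reindex (@mxtens_index k N)) /=; first by apply: eq_bigr => -[].
by exists (@mxtens_unindex k N) => w _; rewrite ?mxtens_indexK ?mxtens_unindexK.
Qed.

Variable l0 : 'I_N.

Definition diag_block M : 'M[K]_k :=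
  \matrix_(a, b) M (mxtens_index (a, l0)) (mxtens_index (b, l0)).

Lemma diag_blockM M M' : blockdiag M ->
  diag_block (M *m M') = diag_block M *m diag_block M'.
Proof.
move=> M_bd; apply/matrixP => a b; rewrite !mxE big_mxtens_index; apply: eq_bigr => z _.
by rewrite (bigD1 l0) //= big1 ?addr0 ?mxE // => l ll0; rewrite M_bd ?mul0r // eq_sym.
Qed.

Lemma diag_block_tens (h : 'M[K]_k) : diag_block (h *t 1%:M) = h.
Proof. by apply/matrixP => a b; rewrite mxE tensmxE mxE eqxx mulr1. Qed.

Lemma diag_blockZ c M : diag_block (c *: M) = c *: diag_block M.
Proof. by apply/matrixP => a b; rewrite !mxE. Qed.

Lemma diag_block_unit M : blockdiag M -> M \in unitmx -> diag_block M \in unitmx.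
Proof.
move=> M_bd M_unit; have := diag_blockM (invmx M) M_bd.
rewrite mulmxV // -(tensmx_scalar1 k N 1) diag_block_tens.
by case/esym/mulmx1_unit.
Qed.

End DiagonalBlocks.

Lemma selfN_eq0 (K : fieldType) (x : K) : 2%:R != 0 :> K -> x = - x -> x = 0.
Proof.
move=> two_neq0 xN; have /eqP : 2%:R * x = 0 by rewrite mulr_natl mulr2n {1}xN addNr.
by rewrite mulf_eq0 (negbTE two_neq0) => /eqP.
Qed.

Lemma comm_Abar_blockdiag (K : fieldType) k r (M : 'M[K]_(k * 2 ^ r)) :
  2%:R != 0 :> K -> (forall i, (i < r)%N -> comm_mx M (Abar K k r i)) -> blockdiag M.
Proof.
(* A_i is diagonal with entries (-1)^(bit i of l), and l != l' differ in some bit. *)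
move=> two_neq0 MA a b l l' ll'.
have /existsP [i bit_i] : [exists i : 'I_r, odd (l %/ 2 ^ i) != odd (l' %/ 2 ^ i)].
  rewrite -negb_forall; apply: contra_neqN ll' => /forallP same_bits; apply: val_inj.
  apply: (bits_inj (ltn_ord l) (ltn_ord l')) => j j_lt.
  exact/eqP/(same_bits (Ordinal j_lt)).
have MAi : M *m Abar K k r i = Abar K k r i *m M := MA i (ltn_ord i).
have := congr1 (fun X : 'M_(k * 2 ^ r) => X (mxtens_index (a, l)) (mxtens_index (b, l')))
  MAi.
rewrite /= Abar_diag mul_mx_diag mul_diag_mx !mxE !mxtens_indexK /=.
rewrite -[(-1) ^+ (l' %/ _)]signr_odd -[(-1) ^+ (l %/ _)]signr_odd.
move: bit_i; case: (odd (l %/ 2 ^ i)); case: (odd (l' %/ 2 ^ i)) => //= _;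
  rewrite expr0 expr1 ?mulr1 ?mul1r ?mulrN1 ?mulN1r;
  [exact: selfN_eq0 | move/esym; exact: selfN_eq0].
Qed.

Section Centralizer.
Variables (K : fieldType) (k r : nat) (Hpre : 'M[K]_k -> Prop).
Local Notation A := (Abar K k r).
Local Notation B := (Bbar K k r).
Local Notation D := (@Dpre K k r Hpre).
Local Notation C := (pcent D).
Implicit Types (c g : 'M[K]_(k * 2 ^ r)) (h : 'M[K]_k).

Definition Bgens (x : 'M[K]_(k * 2 ^ r)) := exists j, (j < r)%N /\ x = B j.

Lemma Dpre_Abar i : (i < r)%N -> D (A i).
Proof. by move=> i_lt; apply: gen_in; right; left; exists i. Qed.

Lemma pcent_Bbar j : (j < r)%N -> C (B j).
Proof.
move=> j_lt; split; first exact: Bbar_unit.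
apply: pcomm_gen; first exact: Bbar_unit.
move=> x [[c [_ ->]]|[[i [_ ->]]|[h [_ ->]]]].
- by exists 1; rewrite scale1r scalar_mxC.
- by exists ((-1) ^+ (i == j)%N); rewrite Bbar_Abar.
- by exists 1; rewrite scale1r comm_tens1mx.
Qed.

Lemma pcent_gen_Bgens b : gen_grp Bgens b -> C b.
Proof. by apply: gen_grp_pcent => _ [j [j_lt ->]]; apply: pcent_Bbar. Qed.

Hypothesis n_gt0 : (0 < k * 2 ^ r)%N.

Lemma pcent_untwist_upto g m : C g -> (m <= r)%N ->
  exists2 b, gen_grp Bgens b & forall i, (i < m)%N -> comm_mx (g *m b) (A i).
Proof.
move=> Cg; elim: m => [|m IH] m_le; first by exists 1%:M => [|[]]; first exact: gen_one.
have [b Bb gbA] := IH (ltnW m_le).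
have Cgb : C (g *m b) by apply: pcentM Cg (pcent_gen_Bgens Bb).
have [c gbAm] := Cgb.2 _ (Dpre_Abar m_le).
have [c1|cN1] := twisted_comm_sign n_gt0 Cgb.1 (Abar_unit K k r m) (Abar_sq K k r m) gbAm.
  exists b => // i; rewrite ltnS leq_eqVlt => /predU1P [->|/gbA //].
  by rewrite /comm_mx gbAm c1 scale1r.
have Bm : gen_grp Bgens (B m) by apply: gen_in; exists m.
exists (b *m B m) => [|i]; first exact: gen_mul.
rewrite /comm_mx mulmxA ltnS leq_eqVlt => /predU1P [->|i_lt].
  rewrite -mulmxA Bbar_Abar eqxx expr1 -scalemxAr !mulmxA gbAm cN1.
  by rewrite -scalemxAl scalerA mulrNN mulr1 scale1r !mulmxA.
by rewrite -mulmxA Bbar_Abar (ltn_eqF i_lt) expr0 scale1r !mulmxA gbA // !mulmxA.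
Qed.

Lemma Dpre_tens h : Hpre h -> D (h *t 1%:M).
Proof. by move=> Hh; apply: gen_in; right; right; exists h. Qed.

Lemma xcent_Dpre c : c \in unitmx -> (forall i, (i < r)%N -> comm_mx c (A i)) ->
  (forall h, Hpre h -> comm_mx c (h *t 1%:M)) -> xcent D c.
Proof.
move=> c_unit cA cH; apply: xcent_gen; split=> // _ [[a [_ ->]]|[[i [i_lt ->]]|[h [Hh ->]]]].
- exact: comm_mx_scalar.
- exact: cA.
- exact: cH.
Qed.

Lemma comm_tens_of_pgl_trivial : pgl_trivial Hpre ->
  forall c h, Hpre h -> comm_mx c (h *t 1%:M).
Proof.
by move=> H_triv c h /H_triv [a ->]; rewrite tensmx_scalar1; apply: comm_mx_scalar.
Qed.

Hypothesis two_neq0 : 2%:R != 0 :> K.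

Lemma comm_tens_of_pconnected : (forall h, Hpre h -> h \in unitmx) ->
  pgl_elem_ab2 Hpre -> pconnected (pcent Hpre) -> forall c,
  C c -> (forall i, (i < r)%N -> comm_mx c (A i)) ->
  forall h, Hpre h -> comm_mx c (h *t 1%:M).
Proof.
move=> H_unit [_ H_sq] H_conn c [c_unit cD] cA h Hh.
have k_gt0 : (0 < k)%N by move: n_gt0; rewrite muln_gt0 => /andP [].
have c_bd := comm_Abar_blockdiag two_neq0 cA.
have l0_lt : (0 < 2 ^ r)%N by rewrite expn_gt0.
pose c0 := diag_block (Ordinal l0_lt) c.
have c0_twist h' chi : c *m (h' *t 1%:M) = chi *: ((h' *t 1%:M) *m c) ->
    c0 *m h' = chi *: (h' *m c0).
  move/(congr1 (diag_block (Ordinal l0_lt))).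
  by rewrite diag_blockZ !diag_blockM ?diag_block_tens //; apply: tens1_blockdiag.
have c0_unit : c0 \in unitmx by apply: diag_block_unit.
have c0_pcent : pcent Hpre c0.
  by split=> // h' Hh'; have [chi /c0_twist] := cD _ (Dpre_tens Hh'); exists chi.
have [a hh] := H_sq h Hh.
have c0h := pconnected_pcent_comm two_neq0 k_gt0 Hh (H_unit h Hh) hh H_conn c0_pcent.
have [chi ch] := cD _ (Dpre_tens Hh).
suff chi1 : chi = 1 by rewrite /comm_mx ch chi1 scale1r.
have hc0_unit : h *m c0 \in unitmx by rewrite unitmx_mul H_unit.
apply/eqP; rewrite -subr_eq0; apply/eqP; apply: (scale_unitmx_eq0 k_gt0 hc0_unit).
by rewrite scalerBl scale1r -(c0_twist _ _ ch) c0h subrr.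
Qed.

End Centralizer.

Lemma pcent_Dpre_factor (K : closedFieldType) k r (Hpre : 'M[K]_k -> Prop) :
  2%:R != 0 :> K -> (0 < k * 2 ^ r)%N -> (forall h, Hpre h -> h \in unitmx) ->
  pgl_trivial Hpre \/ pgl_elem_ab2 Hpre /\ pconnected (pcent Hpre) ->
  forall g, pcent (@Dpre K k r Hpre) g ->
  exists c b,
    [/\ pidcomp (pcent (@Dpre K k r Hpre)) c, gen_grp (@Bgens K k r) b & g = c *m b].
Proof.
move=> two_neq0 n_gt0 H_unit H_cases g Cg.
have [b Bb gbA] := pcent_untwist_upto n_gt0 Cg (leqnn r).
have Cgb := pcentM Cg (pcent_gen_Bgens Hpre Bb).
have b_unit : b \in unitmx := (pcent_gen_Bgens Hpre Bb).1.
exists (g *m b), (invmx b); split; last by rewrite -mulmxA mulmxV ?mulmx1.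
- apply/xcent_pidcomp/xcent_Dpre => //; first exact: Cgb.1.
  case: H_cases => [H_triv|[H_sq H_conn]]; first exact: comm_tens_of_pgl_trivial.
  exact (comm_tens_of_pconnected n_gt0 two_neq0 H_unit H_sq H_conn Cgb gbA).
- exact: gen_inv.
Qed.

Theorem theorem4p10 (K : closedFieldType) (hK : ~~ (2 \in [pchar K]))
  (s t r k : nat) (ht : odd t) (hs : (1 <= s)%N) (ht1 : (1 <= t)%N)
  (hr1 : (1 <= r)%N) (hrs : (r <= s)%N) (hn : (k * 2 ^ r = 2 ^ s * t)%N)
  (Hpre : 'M[K]_k -> Prop) (hH : is_pgl_subgroup Hpre)
  (hHcases : pgl_trivial Hpre \/
             [/\ pgl_elem_ab2 Hpre, pgl_toral Hpre & pconnected (pcent Hpre)]) :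
  let C := pcent (@Dpre K k r Hpre) in
  let C0 := pidcomp C in
  (forall g, C g <->
     gen_grp (fun x => C0 x \/ exists s', (s' < r)%N /\ x = Bbar K k r s') g)
  /\
  (forall g, C g <->
     exists c b, [/\ C0 c,
                     gen_grp (fun x => exists s', (s' < r)%N /\ x = Bbar K k r s') b
                   & g = c *m b]).
Proof.
move=> C C0; have [H_unit _ _ _ _] := hH.
have two_neq0 : 2%:R != 0 :> K by move: hK; rewrite inE.
have n_gt0 : (0 < k * 2 ^ r)%N by rewrite hn muln_gt0 expn_gt0 ht1.
have H_cases : pgl_trivial Hpre \/ pgl_elem_ab2 Hpre /\ pconnected (pcent Hpre).
  by case: hHcases => [|[? _ ?]]; [left | right].
have factor := pcent_Dpre_factor two_neq0 n_gt0 H_unit H_cases.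
have C0_C : forall g, C0 g -> C g := @pidcomp_pcent _ _ _.
split=> g; split.
- move=> /factor [c [b [C0c Bb ->]]].
  by apply: gen_mul (gen_in _) (gen_grp_mono _ Bb) => [|x]; [left | right].
- by apply: gen_grp_pcent => x [/C0_C //|[j [j_lt ->]]]; exact: pcent_Bbar.
- exact: factor.
- by move=> [c [b [C0c Bb ->]]]; apply: pcentM (C0_C _ C0c) (pcent_gen_Bgens Hpre Bb).
Qed.
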